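(* Starting from the freshly initialized sampling data structure (no point opened), the total running time of opening any set $S$ of $k$ points of $P$ by successive calls to MultiTreeOpen is $O(n\log(d\Delta)\log n)$.
   Context: $P\subseteq\mathbb{R}^d$ has $n$ points, $\Delta$ is the ratio of maximum to minimum distance between distinct points of $P$. Tree embedding: compute $\mathrm{MaxDist}$, an upper bound on the maximum pairwise distance within factor $2$ of it; add a uniformly random shift $s\in[0,\mathrm{MaxDist}]$ to each coordinate of all points; the root (height $0$) is the axis-aligned cube of side $2\,\mathrm{MaxDist}$ centered at an input point; recursively each node cube of side $L$ at height $i$ is split into $2^d$ subcubes of side $L/2$, nonempty ones become children connected by edges of weight $\sqrt d\,\mathrm{MaxDist}/2^i$, until each cube has at most one point (all leaves at height $H=O(\log(d\Delta))$). $\mathrm{TreeDist}_T$ is the shortest-path distance in tree $T$. The multi-tree embedding consists of three such trees with independent shifts; $\mathrm{MultiTreeDist}$ is the minimum of the three tree distances, $\mathrm{MultiTreeDist}(x,\emptyset)^2=M:=16d\,\mathrm{MaxDist}^2$. Sampling data structure: weights $w_x$ for $x\in P$, initially $M$; a balanced binary ''sample-tree'' with one leaf per point of $P$, each node's weight being the sum of $w_x$ over leaves in its subtree; a mark bit, initially unmarked, for every node of each of the three trees; and for each tree $T$ and node $v$ the set $P_T(v)\subseteq P$ of points in $v$'s subtree. MultiTreeOpen$(x)$: for each of the three trees $T$: let $v_0$ be the leaf of $T$ containing $x$; traverse towards the root forming a path $v_0,v_1,\dots,v_\ell$ until $v_\ell$ is the root or the parent of $v_\ell$ is marked; mark $v_0,\dots,v_\ell$;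 for each $y\in P_T(v_\ell)$, if $\mathrm{TreeDist}_T(y,x)^2<w_y$ then set $w_y\leftarrow\mathrm{TreeDist}_T(y,x)^2$ and traverse the sample-tree from $y$'s leaf to the root updating node weights depending on $w_y$. *)

From HB Require Import structures.
From mathcomp Require Import all_boot all_order all_algebra.
From mathcomp Require Import reals exp.
Set Implicit Arguments. Unset Strict Implicit. Unset Printing Implicit Defensive.
Import Order.TTheory GRing.Theory Num.Theory.
Local Open Scope ring_scope.

Section MultiTree.
Variables (R : realType) (d n : nat).

(** Points of R^d; the input set P is given as an (injective) indexing
    [P : 'I_n -> point]. *)
Definition point := 'I_d -> R.

Definition edist (x y : point) : R := Num.sqrt (\sum_(j < d) (x j - y j) ^+ 2).

Variable P : 'I_n -> point.

Definition maxdist : R :=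
  \big[Num.max/0]_(i < n) \big[Num.max/0]_(j < n) edist (P i) (P j).

Definition mindist : R :=
  \big[Num.min/maxdist]_(i < n) \big[Num.min/maxdist]_(j < n | j != i)
     edist (P i) (P j).

Definition aspect : R := maxdist / mindist.

Variable MD : R.

(** A tree of the multi-tree embedding is given by its shift vector [s]
    (added to every point) and the index [c] of the input point at whose
    shifted position the root cube (side 2 MD) is centered.
    The cube of height i containing point x is identified by its integer
    label: coordinate j is the index of the half-open slab of width
    2 MD / 2^i (counted from the root cube's lower corner), capped at
    2^i - 1 so that the upper boundary face belongs to the last cube. *)
Definition cell (s : point) (c : 'I_n) (i : nat) (x : 'I_n) : {ffun 'I_d -> int} :=
  [ffun j => Order.min
      (Num.floor (((P x j + s j) - (P c j + s j - MD)) / (2 * MD / 2 ^+ i)))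
      ((2 ^ i)%N - 1)%:Z].

Definition separated (s : point) (c : 'I_n) (i : nat) : bool :=
  [forall x : 'I_n, forall y : 'I_n, (x != y) ==> (cell s c i x != cell s c i y)].

Definition is_tree_height (s : point) (c : 'I_n) (H : nat) : Prop :=
  separated s c H /\ (forall h : nat, (h < H)%N -> ~~ separated s c h).

(** Tree distance between the leaves of x and y: the lowest common ancestor
    is at the largest height h at which x,y share a cube; the path goes
    through edges of weight sqrt d MD / 2^i for i = h..H-1, on both sides. *)
Definition lca_height (s : point) (c : 'I_n) (H : nat) (x y : 'I_n) : nat :=
  \max_(i < H.+1 | cell s c i x == cell s c i y) i.

Definition tree_dist (s : point) (c : 'I_n) (H : nat) (x y : 'I_n) : R :=
  if x == y then 0 else
  2 * \sum_(lca_height s c H x y <= i < H) (Num.sqrt d%:R * MD / 2 ^+ i).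

Definition Minit : R := 16 * d%:R * MD ^+ 2.

(** Tree nodes are (height, cube label); marks of tree t: [marks t h lab]. *)
Definition marks_t := 'I_3 -> nat -> {ffun 'I_d -> int} -> bool.
Definition state := (marks_t * ('I_n -> R))%type.

Definition init_state : state := (fun _ _ _ => false, fun _ => Minit).

(** Depth of the balanced binary sample-tree with n leaves. *)
Definition sample_depth : nat := up_log 2 n.

Variables (s : 'I_3 -> point) (c : 'I_3 -> 'I_n) (H : 'I_3 -> nat).

(** Height g of v_l: walking up from the leaf (height H) the first node that
    is the root or whose parent is marked, i.e. the largest such height. *)
Definition top_height (m : marks_t) (t : 'I_3) (x : 'I_n) : nat :=
  \max_(i < (H t).+1 | (i == 0%N :> nat) || m t i.-1 (cell (s t) (c t) i.-1 x)) i.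

(** Cost = (l+1) nodes traversed and marked
         + |P_T(v_l)| points scanned
         + (number of weight updates) * (sample-tree depth + 1). *)
Definition tree_open (t : 'I_3) (x : 'I_n) (st : state) : state * nat :=
  let: (m, w) := st in
  let g := top_height m t x in
  let inP y := cell (s t) (c t) g y == cell (s t) (c t) g x in
  let td2 y := tree_dist (s t) (c t) (H t) y x ^+ 2 in
  let upd y := inP y && (td2 y < w y) in
  let m' := fun t' h lab =>
     m t' h lab || [&& t' == t, (g <= h <= H t)%N & lab == cell (s t) (c t) h x] in
  let w' := fun y => if upd y then td2 y else w y in
  let cost := ((H t - g).+1 + #|[pred y | inP y]|
               + #|[pred y | upd y]| * sample_depth.+1)%N in
  ((m', w'), cost).

Definition multi_open (x : 'I_n) (st : state) : state * nat :=
  foldl (fun acc t => let: (st1, k) := acc in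
                      let: (st2, k2) := tree_open t x st1 in (st2, (k + k2)%N))
        (st, 0%N) (enum 'I_3).

Fixpoint run_cost (S : seq 'I_n) (st : state) : nat :=
  match S with
  | [::] => 0%N
  | x :: S' => let: (st', k) := multi_open x st in (k + run_cost S' st')%N
  end.

End MultiTree.

Definition log2 {R : realType} (x : R) : R := ln x / ln 2.

(* Amortization: let the potential be the total number of marked nodes lying on
   the leaf-to-root paths of all points, in all three trees. It never exceeds
   3 n (H + 1). A call of MultiTreeOpen on a tree walks up from x through
   unmarked nodes only and marks them, and every point scanned in P_T(v_l)
   other than x sees the newly marked v_l on its path; so each unit of work
   (up to the sample-tree depth log n per weight update) is paid for by an
   increase of the potential, up to an additive constant per call. Finally
   all three trees have height O(log(d Delta)): once cubes have side below
   MinDist / sqrt d they hold at most one point. *)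
From mathcomp Require Import all_boot all_order all_algebra.
From mathcomp Require Import reals exp.
From mathcomp Require Import boolp ring lra zify.

Set Implicit Arguments.
Unset Strict Implicit.
Unset Printing Implicit Defensive.

Import Order.TTheory GRing.Theory Num.Theory.

Lemma leq_implb (a b : bool) : (a -> b) -> a <= b.
Proof. by case: a; case: b => // /(_ isT). Qed.

Lemma sum_itv_indicator k a b : b <= k -> \sum_(h < k) ((a <= h < b) : nat) = b - a.
Proof.
elim: k b => [|k IH] b hbk; first by rewrite big_ord0; lia.
rewrite big_ord_recr /=; case: (ltnP b k.+1) => hb.
  by rewrite IH ?andbF ?addn0 //; lia.
have {hb hbk}-> : b = k.+1 by lia.
rewrite andbT (eq_bigr (fun h : 'I_k => ((a <= h) && (h < k)) : nat)) => [|h _].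
  by rewrite IH //; case: leqP => /=; lia.
by rewrite ltnS (ltnW (ltn_ord h)) (ltn_ord h).
Qed.

Section Amortization.
Variables (R : realType) (d n : nat) (P : 'I_n -> point R d) (MD : R)
  (s : 'I_3 -> point R d) (c : 'I_3 -> 'I_n) (H : 'I_3 -> nat).

Local Notation cube t h y := (cell P MD (s t) (c t) h y).
Local Notation D := (sample_depth n).

Definition marked_on_path (m : marks_t d) t y : nat :=
  \sum_(h < (H t).+1) m t h (cube t h y).

Definition potential (m : marks_t d) : nat :=
  \sum_(t < 3) \sum_(y < n) marked_on_path m t y.

Definition sub_marks (m m' : marks_t d) := forall t h lab, m t h lab -> m' t h lab.

Lemma marked_on_path_mono m m' t y :
  sub_marks m m' -> marked_on_path m t y <= marked_on_path m' t y.
Proof. by move=> mm'; apply: leq_sum => h _; apply/leq_implb/mm'. Qed.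

Lemma potential_grow m m' t (gain : 'I_n -> nat) :
  sub_marks m m' ->
  (forall y, marked_on_path m t y + gain y <= marked_on_path m' t y) ->
  potential m + \sum_(y < n) gain y <= potential m'.
Proof.
move=> mm' hgain; rewrite /potential (bigD1 t) //= [leqRHS](bigD1 t) //=.
rewrite addnAC -big_split /=; apply: leq_add; last first.
  by apply: leq_sum => t' _; apply: leq_sum => y _; exact: marked_on_path_mono.
by apply: leq_sum => y _; exact: hgain.
Qed.

Lemma potential_le m : potential m <= \sum_(t < 3) n * (H t).+1.
Proof.
apply: leq_sum => t _; rewrite -[n in n * _]card_ord -sum_nat_const.
apply: leq_sum => y _; rewrite -[leqRHS]card_ord -sum1_card.
by apply: leq_sum => h _; exact: leq_b1.
Qed.

Hypothesis sep : forall t, separated P MD (s t) (c t) (H t).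

Lemma cube_leaf_eq t x y : cube t (H t) y = cube t (H t) x -> y = x.
Proof.
move=> hxy; apply/eqP; apply: contraT => hyx.
by have /forallP/(_ y)/forallP/(_ x) := sep t; rewrite hyx hxy eqxx.
Qed.

Section TreeOpen.
Variables (t : 'I_3) (x : 'I_n) (m : marks_t d) (w : 'I_n -> R).

Let g := top_height P MD s c H m t x.
Let m' := (tree_open P MD s c H t x (m, w)).1.1.
Let scanned := [pred y | cube t g y == cube t g x].

Lemma top_height_le : g <= H t.
Proof. by apply/bigmax_leqP => i _; rewrite -ltnS. Qed.

Lemma top_height_unmarked h : g <= h < H t -> ~~ m t h (cube t h x).
Proof.
move=> /andP[gh hH]; apply/negP => hm.
have hh : h.+1 < (H t).+1 by rewrite ltnS.
have : h.+1 <= g := @leq_bigmax_cond _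
  (fun i : 'I_(H t).+1 => (i == 0 :> nat) || m t i.-1 (cube t i.-1 x))
  (fun i => i) (Ordinal hh) (introT orP (or_intror hm)).
lia.
Qed.

Lemma tree_open_sub_marks : sub_marks m m'.
Proof. by move=> t' h lab hm; rewrite /m' /= hm. Qed.

Lemma tree_open_marks_path h : g <= h <= H t -> m' t h (cube t h x).
Proof. by move=> hh; rewrite /m' /= eqxx hh eqxx orbT. Qed.

Lemma marked_on_path_opened :
  marked_on_path m t x + (H t - g) <= marked_on_path m' t x.
Proof.
rewrite -(sum_itv_indicator g (leqnSn (H t))) -big_split /=.
apply: leq_sum => h _; case: (boolP (g <= h < H t)) => hh; last first.
  by rewrite addn0; apply/leq_implb/tree_open_sub_marks.
rewrite (negbTE (top_height_unmarked hh)) tree_open_marks_path //.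
by case/andP: hh => -> /ltnW ->.
Qed.

Lemma marked_on_path_cube y : y != x -> y \in scanned ->
  (marked_on_path m t y).+1 <= marked_on_path m' t y.
Proof.
move=> yx /eqP yg; have gH : g < H t.
  rewrite ltn_neqAle top_height_le andbT; apply: contra yx => /eqP eg.
  by rewrite (@cube_leaf_eq t x y) // -eg.
rewrite /marked_on_path (bigD1 (Ordinal (ltnW gH : g < (H t).+1))) //=.
rewrite [leqRHS](bigD1 (Ordinal (ltnW gH : g < (H t).+1))) //= yg.
rewrite (negbTE (top_height_unmarked _)) ?leqnn //.
rewrite tree_open_marks_path ?leqnn ?top_height_le //.
by rewrite add0n add1n ltnS; apply: leq_sum => h _; apply/leq_implb/tree_open_sub_marks.
Qed.

Lemma potential_tree_open : potential m + (H t - g) + #|scanned| <= potential m' + 1.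
Proof.
pose gain y : nat := if y == x then H t - g else y \in scanned.
have hgain y : marked_on_path m t y + gain y <= marked_on_path m' t y.
  rewrite /gain; case: eqP => [-> | /eqP yx]; first exact: marked_on_path_opened.
  case: (boolP (y \in scanned)) => [yP | _]; first by rewrite addn1; exact: marked_on_path_cube.
  by rewrite addn0; apply: marked_on_path_mono; exact: tree_open_sub_marks.
have := potential_grow tree_open_sub_marks hgain.
rewrite (bigD1 x) //= {1}/gain eqxx (cardD1 x) inE eqxx.
have -> : #|[predD1 scanned & x]| = \sum_(y < n | y != x) gain y.
  rewrite -sum1_card big_mkcond [RHS]big_mkcond; apply: eq_bigr => y _.
  by rewrite /gain !inE; case: (y == x) => //=; case: (_ == _).
rewrite add1n; set others := \sum_(i < n | i != x) gain i; lia.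
Qed.

Lemma tree_open_cost_le :
  (tree_open P MD s c H t x (m, w)).2 <= (H t - g).+1 + #|scanned| * D.+2.
Proof.
rewrite /=; set A := #|_|; set k := #|_|.
have kA : k <= A by apply/subset_leq_card/subsetP => y; rewrite !inE => /andP[].
rewrite -addnA leq_add2l; nia.
Qed.

End TreeOpen.

Lemma tree_open_amortized t x st :
  (tree_open P MD s c H t x st).2 + D.+2 * potential st.1
    <= D.+2 * (potential (tree_open P MD s c H t x st).1.1 + 2).
Proof.
case: st => m w.
have := potential_tree_open t x m w; have := tree_open_cost_le t x m w.
move: (tree_open _ _ _ _ _ _ _ _) => r /=; nia.
Qed.

Let open_step x (acc : state R d n * nat) t :=
  let: (st1, k) := acc in let: (st2, k2) := tree_open P MD s c H t x st1 in (st2, k + k2).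

Lemma foldl_open_step_amortized x ts st k0 :
  let r := foldl (open_step x) (st, k0) ts in
  r.2 + D.+2 * potential st.1 <= k0 + D.+2 * (potential r.1.1 + 2 * size ts).
Proof.
elim: ts st k0 => [|t ts IH] st k0 /=; first by rewrite muln0 addn0 addnC.
have := tree_open_amortized t x st; rewrite /open_step.
case: (tree_open _ _ _ _ _ _ _ _) => st2 k2 /= h1.
have := IH st2 (k0 + k2); move: (foldl _ _ _) => r /=; nia.
Qed.

Lemma multi_open_amortized x st :
  (multi_open P MD s c H x st).2 + D.+2 * potential st.1
    <= D.+2 * (potential (multi_open P MD s c H x st).1.1 + 6).
Proof. by have := foldl_open_step_amortized x (enum 'I_3) st 0; rewrite size_enum_ord. Qed.

Lemma run_cost_amortized S st :
  run_cost P MD s c H S st + D.+2 * potential st.1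
    <= D.+2 * (\sum_(t < 3) n * (H t).+1 + 6 * size S).
Proof.
elim: S st => [|x S IH] st /=.
  by rewrite muln0 addn0 leq_mul2l potential_le orbT.
have := multi_open_amortized x st.
case: (multi_open _ _ _ _ _ _ _) => st' k /=.
have := IH st'.
move: (run_cost _ _ _ _ _ _ _) (potential st.1) (potential st'.1) D.+2 (\sum_(t < 3) _).
move=> r p p' E B; nia.
Qed.

Lemma run_cost_le S st h :
  (forall t, H t <= h) -> size S <= n ->
  run_cost P MD s c H S st <= 3 * n * D.+2 * h.+3.
Proof.
move=> Hh Sn; apply: leq_trans (leq_addr (D.+2 * potential st.1) _) _.
apply: leq_trans (run_cost_amortized S st) _.
have : \sum_(t < 3) n * (H t).+1 <= \sum_(t < 3) n * h.+1.
  by apply: leq_sum => t _; rewrite leq_mul2l ltnS Hh orbT.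
rewrite sum_nat_const card_ord; nia.
Qed.

End Amortization.

Lemma tree_height_le (R : realType) d n (P : 'I_n -> point R d) MD s c H h :
  is_tree_height P MD s c H -> separated P MD s c h -> H <= h.
Proof. by case=> _ minimal sep_h; rewrite leqNgt; apply: contraL sep_h; exact: minimal. Qed.

Local Open Scope ring_scope.

Lemma capped_floor_bounds {R : archiRealFieldType} (N : nat) (z : R) :
  (0 < N)%N -> 0 <= z <= N%:R ->
  let v := Order.min (Num.floor z) (N - 1)%N%:Z in v%:~R <= z <= v%:~R + 1.
Proof.
move=> N0 /andP[z0 zN] /=; case: (leP (Num.floor z) (N - 1)%N%:Z) => hv.
  by have /andP[-> /ltW] := floor_itv z; rewrite intrD.
have e : (N - 1)%N%:Z%:~R = N%:R - 1 :> R by rewrite -pmulrn natrB.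
have /ltW := hv; rewrite floor_ge_int e => ->; lra.
Qed.

Section Geometry.
Variables (R : realType) (d n : nat).
Implicit Types x y : point R d.

Lemma edist_ge0 x y : 0 <= edist x y.
Proof. exact: sqrtr_ge0. Qed.

Lemma sqr_edist x y : edist x y ^+ 2 = \sum_(j < d) (x j - y j) ^+ 2.
Proof. by rewrite sqr_sqrtr // sumr_ge0 // => j _; exact: sqr_ge0. Qed.

Lemma coord_le_edist x y j : `|x j - y j| <= edist x y.
Proof.
rewrite -(ler_pXn2r (isT : (0 < 2)%N)) ?nnegrE ?edist_ge0 //.
rewrite real_normK ?num_real // sqr_edist.
by rewrite (bigD1 j) //= lerDl sumr_ge0 // => k _; exact: sqr_ge0.
Qed.

Lemma edist_eq0 x y : edist x y = 0 -> x =1 y.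
Proof.
move=> e0 j; have := coord_le_edist x y j.
by rewrite e0 normr_le0 subr_eq0 => /eqP.
Qed.

Lemma sqr_edist_le (L : R) x y :
  (forall j, `|x j - y j| <= L) -> edist x y ^+ 2 <= d%:R * L ^+ 2.
Proof.
move=> xyL; rewrite sqr_edist mulr_natl -[X in _ *+ X]card_ord -sumr_const.
by apply: ler_sum => j _; move: (xyL j); rewrite ler_norml => /andP[]; nra.
Qed.

Variable P : 'I_n -> point R d.

Lemma edist_le_maxdist i j : edist (P i) (P j) <= maxdist P.
Proof.
apply: le_trans (le_bigmax _ (fun i => \big[Num.max/0]_(j < n) edist (P i) (P j)) i).
exact: (le_bigmax _ (fun j => edist (P i) (P j))).
Qed.

Lemma mindist_le_edist i j : i != j -> mindist P <= edist (P i) (P j).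
Proof.
move=> ij; apply: le_trans (bigmin_le _ i (fun i =>
  \big[Num.min/maxdist P]_(j < n | j != i) edist (P i) (P j))) _.
by apply: (bigmin_le_cond _ (fun j => edist (P i) (P j))); rewrite eq_sym.
Qed.

Lemma mindist_le_maxdist : mindist P <= maxdist P.
Proof. exact: bigmin_le_id. Qed.

Hypotheses (Pinj : injective P) (n_gt1 : (1 < n)%N).

Lemma edist_gt0 i j : i != j -> 0 < edist (P i) (P j).
Proof.
move=> ij; rewrite lt_neqAle edist_ge0 andbT eq_sym; apply: contra ij => /eqP.
by move/edist_eq0/funext/Pinj => ->.
Qed.

Let i0 : 'I_n := Ordinal (ltnW n_gt1).
Let i1 : 'I_n := Ordinal n_gt1.

Lemma maxdist_gt0 : 0 < maxdist P.
Proof. exact: lt_le_trans (edist_gt0 (isT : i0 != i1)) (edist_le_maxdist _ _). Qed.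

Lemma mindist_gt0 : 0 < mindist P.
Proof.
apply: lt_bigmin => [|i _]; first exact: maxdist_gt0.
apply: lt_bigmin => [|j ji]; first exact: maxdist_gt0.
by apply: edist_gt0; rewrite eq_sym.
Qed.

Lemma aspect_ge1 : 1 <= aspect P.
Proof. by rewrite ler_pdivlMr ?mindist_gt0 // mul1r mindist_le_maxdist. Qed.

Lemma dim_gt0 : (0 < d)%N.
Proof.
rewrite lt0n; apply/eqP => d0; have := edist_gt0 (isT : i0 != i1).
rewrite /edist big1 ?sqrtr0 ?ltxx // => j _.
by move: (ltn_ord j); rewrite [X in (_ < X)%N]d0.
Qed.
Variables (MD : R) (s : point R d) (c : 'I_n).

Lemma cell_coord_close h (x y : 'I_n) : maxdist P <= MD ->
  cell P MD s c h x = cell P MD s c h y ->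
  forall j, `|P x j - P y j| <= 2 * MD / 2 ^+ h.
Proof.
move=> maxdist_le_MD + j => /(congr1 (fun f : {ffun 'I_d -> int} => f j)).
rewrite !ffunE.
set L := 2 * MD / 2 ^+ h.
have T0 : 0 < 2 ^+ h :> R by rewrite exprn_gt0.
have L0 : 0 < L by rewrite divr_gt0 // mulr_gt0 // (lt_le_trans maxdist_gt0).
have LT : L * 2 ^+ h = 2 * MD by rewrite divfK ?gt_eqF.
have arg_bounds z : 0 <= (P z j + s j - (P c j + s j - MD)) / L <= (2 ^ h)%N%:R.
  have := le_trans (coord_le_edist _ _ j) (edist_le_maxdist z c).
  move/le_trans/(_ maxdist_le_MD); rewrite ler_norml => /andP[lo hi].
  rewrite natrX ler_pdivrMr // [_ * L]mulrC LT divr_ge0 ?(ltW L0) /=; lra.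
have pow_gt0 : (0 < 2 ^ h)%N by rewrite expn_gt0.
have := capped_floor_bounds pow_gt0 (arg_bounds x).
have := capped_floor_bounds pow_gt0 (arg_bounds y) => /=.
set ux := (P x j + _ - _) / L; set uy := (P y j + _ - _) / L.
move=> uy_bounds + exy; rewrite exy => ux_bounds.
have -> : P x j - P y j = (ux - uy) * L by rewrite -mulrBl divfK ?gt_eqF //; ring.
rewrite normrM (gtr0_norm L0); apply: ler_piMl; first exact: ltW.
by rewrite ler_norml; lra.
Qed.

Lemma separated_of_aspect h : maxdist P <= MD <= 2 * maxdist P ->
  8 * (d%:R * aspect P) <= 2 ^+ h -> separated P MD s c h.
Proof.
move=> /andP[maxdist_le_MD MD_le] hT.
apply/forallP => x; apply/forallP => y; apply/implyP => xy.
apply/negP => /eqP /(cell_coord_close maxdist_le_MD) close.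
have M0 := maxdist_gt0; have m0 := mindist_gt0.
have d1 : 1 <= d%:R :> R by rewrite ler1n dim_gt0.
have T0 : 0 < 2 ^+ h :> R by rewrite exprn_gt0.
have e0 := edist_ge0 (P x) (P y); have me := mindist_le_edist xy.
have hTm : 8 * d%:R * maxdist P <= 2 ^+ h * edist (P x) (P y).
  apply: le_trans (ler_wpM2l (ltW T0) me).
  by rewrite -(ler_pdivrMr _ _ m0) -!mulrA.
have hTe : (2 ^+ h * edist (P x) (P y)) ^+ 2 <= d%:R * (2 * MD) ^+ 2.
  have := sqr_edist_le close.
  rewrite expr_div_n mulrA ler_pdivlMr ?exprn_gt0 //; lra.
have sq1 : (8 * d%:R * maxdist P) ^+ 2 <= (2 ^+ h * edist (P x) (P y)) ^+ 2.
  by rewrite ler_pXn2r ?nnegrE ?mulr_ge0 // ltW.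
have sq2 : d%:R * (2 * MD) ^+ 2 <= d%:R * (4 * maxdist P) ^+ 2.
  by rewrite ler_pM2l ?ltr0n ?dim_gt0 // ler_pXn2r ?nnegrE //; lra.
have dM0 : 0 < d%:R * maxdist P ^+ 2.
  by rewrite mulr_gt0 ?exprn_gt0 // (lt_le_trans ltr01).
have := le_trans sq1 (le_trans hTe sq2); nra.
Qed.

End Geometry.

Section Log2.
Variable R : realType.

Let ln2_gt0 : 0 < ln (2 : R).
Proof. by rewrite ln_gt0 // ltr1n. Qed.

Lemma log2_ge0 (x : R) : 1 <= x -> 0 <= log2 x.
Proof. by move=> x1; apply: divr_ge0; [exact: ln_ge0 | exact: ltW]. Qed.

Lemma log2_exp2 k : log2 (2 ^+ k : R) = k%:R.
Proof. by rewrite /log2 lnXn // -[_ *+ k]mulr_natl mulfK ?gt_eqF. Qed.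

Lemma log2_lt (x y : R) : 0 < x -> 0 < y -> (log2 x < log2 y) = (x < y).
Proof. by move=> x0 y0; rewrite ltr_pM2r ?invr_gt0 // ltr_ln ?posrE. Qed.

Lemma log2_floor (x : R) : 1 <= x -> exists k : nat, k%:R <= log2 x /\ x < 2 ^+ k.+1.
Proof.
move=> x1; exists (Num.truncn (log2 x)); split; first by rewrite truncn_le log2_ge0.
by rewrite -log2_lt ?exprn_gt0 ?(lt_le_trans ltr01 x1) // log2_exp2 truncnS_gt.
Qed.

Lemma up_log2_le_log2 n : (1 < n)%N -> (up_log 2 n)%:R <= log2 (n%:R : R) + 1.
Proof.
move=> n_gt1; have up_gt0 : (0 < up_log 2 n)%N by rewrite up_log_gt0 n_gt1.
have := up_log_gtn (isT : (1 < 2)%N) n_gt1.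
rewrite -(ltr_nat R) natrX -log2_lt ?exprn_gt0 ?ltr0n 1?ltnW // log2_exp2 => /ltW.
by rewrite -(prednK up_gt0) -natr1 lerD2r.
Qed.

Lemma sample_depth_le n : (1 < n)%N -> (sample_depth n).+2%:R <= 3 * (1 + log2 (n%:R : R)).
Proof.
move=> n_gt1; have n_ge1 : 1 <= n%:R :> R by rewrite ler1n ltnW.
have := up_log2_le_log2 n_gt1; have := log2_ge0 n_ge1.
rewrite /sample_depth -!natr1; lra.
Qed.

End Log2.

Theorem mainTheorem4 :
  exists C : nat,
  forall (R : realType) (d n : nat) (P : 'I_n -> 'I_d -> R) (MD : R)
         (s : 'I_3 -> 'I_d -> R) (c : 'I_3 -> 'I_n) (H : 'I_3 -> nat)
         (S : seq 'I_n),
    (1 < n)%N ->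
    injective P ->
    maxdist P <= MD <= 2 * maxdist P ->
    (forall t j, 0 <= s t j <= MD) ->
    (forall t, is_tree_height P MD (s t) (c t) (H t)) ->
    uniq S ->
    (run_cost P MD s c H S (init_state d n MD))%:R
      <= C%:R * n%:R * (1 + log2 (d%:R * aspect P)) * (1 + log2 (n%:R : R)).
Proof.
exists 63%N => R d n P MD s c H S n_gt1 Pinj MD_bounds _ tree_height uniqS.
set Y := d%:R * aspect P.
have Y_ge1 : 1 <= Y.
  by rewrite -[1]mulr1 ler_pM ?ler1n ?(dim_gt0 Pinj n_gt1) ?(aspect_ge1 Pinj n_gt1).
have [k [k_le Y_lt]] := log2_floor Y_ge1.
have H_le t : (H t <= k.+4)%N.
  apply: tree_height_le (tree_height t) _; apply: separated_of_aspect => //.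
  have -> : 2 ^+ k.+4 = 8 * 2 ^+ k.+1 :> R by rewrite -[k.+4]/(3 + k.+1)%N exprD -natrX.
  by rewrite ler_pM2l // ltW.
have size_S : (size S <= n)%N.
  by rewrite -(card_uniqP uniqS) -[X in (_ <= X)%N]card_ord max_card.
have := run_cost_le (fun t => (tree_height t).1) (init_state d n MD) H_le size_S.
rewrite -(ler_nat R) => /le_trans; apply; rewrite !natrM.
have D_le := sample_depth_le R n_gt1.
have k_le' : k.+4.+3%:R <= 7 * (1 + log2 Y).
  have := log2_ge0 Y_ge1; move: k_le; rewrite -!natr1; lra.
apply: le_trans (_ : 3 * n%:R * (3 * (1 + log2 (n%:R : R)) * (7 * (1 + log2 Y))) <= _).
  by rewrite -mulrA; apply: ler_wpM2l; [rewrite mulr_ge0 | apply: ler_pM].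
lra.
Qed.
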